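(* Let $(A,v)$ and $(B,w)$ be valued abelian groups and let $f:A\to B$ be a group homomorphism. Assume there is a subset $S\subseteq A$ such that: (a) the assignment $vs\mapsto wf(s)$ for $s\in S$ defines an order preserving map $\varphi:v(S)\to w(B)$; that is, for $s,s'\in S$, $vs=vs'$ implies $wf(s)=wf(s')$, and $vs<vs'$ implies $wf(s)<wf(s')$; (b) for all $a\in A$ and $s\in S$: if $va\ge vs$ then $wf(a)\ge wf(s)$; (c) for every $b\in B\setminus\{0\}$ there is some $s\in S$ with $w(b-f(s))>wb$. Suppose further that $(A,v)$ is spherically complete. Then $f$ is surjective and $(B,w)$ is spherically complete.
   Context: A valued abelian group $(A,v)$ is an abelian group $A$ with a map $v:A\to \Gamma\cup\{\infty\}$, $a\mapsto va$, onto a totally ordered set with largest element $\infty$, such that $va=\infty\iff a=0$ and $v(a-a')\ge\min\{va,va'\}$ for all $a,a'\in A$. For $X\subseteq A$ write $v(X)=\{vx\mid x\in X\}$. For $a\in A$ and $\alpha\in v(A)$ the ball is $B_\alpha(a)=\{a'\in A\mid v(a-a')\ge\alpha\}$. A nest of balls is a set of balls totally ordered by inclusion; $(A,v)$ is spherically complete if every nest of balls has nonempty intersection. *)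

From HB Require Import structures.
From mathcomp Require Import all_boot all_order all_algebra.
Set Implicit Arguments. Unset Strict Implicit. Unset Printing Implicit Defensive.
Import Order.TTheory GRing.Theory.
Local Open Scope ring_scope.
Local Open Scope order_scope.

(* A valuation on an abelian group A with values in a totally ordered set G
   whose largest element \top plays the role of infinity. *)
Definition valuation (A : zmodType) (d : Order.disp_t) (G : tOrderType d)
  (v : A -> G) : Prop :=
  [/\ (forall g : G, exists a : A, v a = g),
      (forall a : A, v a = \top <-> a = 0%R) &
      (forall a a' : A, Order.min (v a) (v a') <= v (a - a')%R)].

Definition vball (A : zmodType) (d : Order.disp_t) (G : tOrderType d)
  (v : A -> G) (alpha : G) (a : A) : A -> Prop :=
  fun a' => alpha <= v (a - a')%R.

Definition is_ball (A : zmodType) (d : Order.disp_t) (G : tOrderType d)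
  (v : A -> G) (X : A -> Prop) : Prop :=
  exists (a : A) (alpha : G), (exists x : A, v x = alpha) /\ X = vball v alpha a.

Definition nest_of_balls (A : zmodType) (d : Order.disp_t) (G : tOrderType d)
  (v : A -> G) (N : (A -> Prop) -> Prop) : Prop :=
  (forall X, N X -> is_ball v X) /\
  (forall X Y, N X -> N Y -> (forall x, X x -> Y x) \/ (forall x, Y x -> X x)).

Definition spherically_complete (A : zmodType) (d : Order.disp_t)
  (G : tOrderType d) (v : A -> G) : Prop :=
  forall N : (A -> Prop) -> Prop, nest_of_balls v N ->
    exists a : A, forall X, N X -> X a.

From HB Require Import structures.
From mathcomp Require Import all_boot all_order all_algebra.
From mathcomp Require Import boolp classical_sets.
Import Order.TTheory GRing.Theory.
Set Implicit Arguments.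
Unset Strict Implicit.
Unset Printing Implicit Defensive.
Local Open Scope ring_scope.
Local Open Scope order_scope.
Local Open Scope classical_set_scope.

(* Given a nest M of balls in B, call a ball B_{vs}(x) of A with s in S an
   approximation of M if B_{wf(s)}(f x) meets every ball of M.  Zorn's lemma
   gives a maximal nest N of approximations, and spherical completeness of A
   a point a in all of N.  Suppose f a misses a ball B_b0(y0) of M.  Then (c)
   for y0 - f a yields s in S with wf(s) = w(y0 - f a) < w(y0 - f(a + s)),
   and by (b) every ball of N has radius at most v s.  Unless b0 = oo and
   f(a + s) = y0 (then f(a + s) lies in all balls of M), the radius
   min(b0, w(y0 - f(a + s))) is some wf(s1), so B_{vs1}(a + s) is an
   approximation with v s1 > v s.  It lies inside every ball of N, hence
   belongs to N by maximality, yet it does not contain a.  Surjectivity is the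
   case M = {B_oo(b)}. *)

Section ValuationTheory.
Variables (A : zmodType) (d : Order.disp_t) (G : tOrderType d) (v : A -> G).
Hypothesis hv : valuation v.

Lemma valuation0 : v 0 = \top.
Proof. by case: hv => _ /(_ 0) [_ ->]. Qed.

Lemma valuation_eq_top a : v a = \top -> a = 0.
Proof. by case: hv => _ /(_ a) []. Qed.

Lemma valuation_ge_min a b : Order.min (v a) (v b) <= v (a - b).
Proof. by case: hv. Qed.

Lemma valuationN a : v (- a) = v a.
Proof.
have le_vN b : v b <= v (- b).
  by have := valuation_ge_min 0 b; rewrite valuation0 sub0r min_r ?lex1.
apply/le_anti/andP; split; last exact: le_vN.
by have := le_vN (- a); rewrite opprK.
Qed.

Lemma valuationBC a b : v (a - b) = v (b - a).
Proof. by rewrite -valuationN opprB. Qed.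

Lemma valuation_trans r a b c :
  r <= v (a - b) -> r <= v (b - c) -> r <= v (a - c).
Proof.
move=> r_ab r_bc; have -> : a - c = (a - b) - (c - b) by rewrite opprB addrA subrK.
by apply: le_trans (valuation_ge_min _ _); rewrite le_min r_ab valuationBC.
Qed.

Lemma valuation_eq_of_lt a b : v a < v (a - b) -> v b = v a.
Proof.
move=> lt_a; have le_ab : v a <= v b.
  by have := valuation_ge_min a (a - b); rewrite subKr min_l ?(ltW lt_a).
apply/le_anti; rewrite le_ab andbT leNgt; apply/negP => lt_ba.
have := valuation_ge_min b (b - a); rewrite subKr -valuationBC.
by apply/negP; rewrite -ltNge lt_min lt_ba.
Qed.

Lemma vball_center r a : vball v r a a.
Proof. by rewrite /vball subrr valuation0 lex1. Qed.

Lemma vball_topE a b : vball v \top a b -> b = a.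
Proof.
move=> top_ab; apply/esym/subr0_eq/valuation_eq_top.
by apply/le_anti; rewrite top_ab lex1.
Qed.

End ValuationTheory.

Section Transfer.
Variables (A B : zmodType) (d1 d2 : Order.disp_t).
Variables (G1 : tOrderType d1) (G2 : tOrderType d2).
Variables (v : A -> G1) (w : B -> G2) (f : {additive A -> B}) (S : set A).
Hypotheses (hv : valuation v) (hw : valuation w).
Hypothesis phi_eq : forall s s', S s -> S s' -> v s = v s' -> w (f s) = w (f s').
Hypothesis phi_lt : forall s s', S s -> S s' -> v s < v s' -> w (f s) < w (f s').
Hypothesis f_le : forall a s, S s -> v s <= v a -> w (f s) <= w (f a).
Hypothesis S_approx : forall b, b != 0 -> exists s, S s /\ w b < w (b - f s).

Lemma le_v_of_le_wf s t : S s -> S t -> w (f t) <= w (f s) -> v t <= v s.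
Proof. by move=> Ss St; apply: contraTT; rewrite -!ltNge; exact: phi_lt. Qed.

Lemma lt_v_of_lt_wf s t : S s -> S t -> w (f s) < w (f t) -> v s < v t.
Proof.
move=> Ss St lt_st; rewrite lt_neqAle le_v_of_le_wf ?(ltW lt_st) // andbT.
by apply/eqP => e; move: lt_st; rewrite (phi_eq Ss St e) ltxx.
Qed.

Lemma wf_onto r : r != \top -> exists2 s, S s & w (f s) = r.
Proof.
case: (hw) => /(_ r) [b <-] _ _ ntop_b.
have /S_approx [s [Ss lt_b]] : b != 0.
  by apply: contra_neq ntop_b => ->; exact: valuation0 hw.
by exists s => //; exact/(valuation_eq_of_lt hw).
Qed.

Variable M : set (set B).
Hypothesis nestM : nest_of_balls w M.

Definition meets_nest (r : G2) (y : B) :=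
  forall Y, M Y -> exists2 z, Y z & r <= w (z - y).

Lemma meets_nest_ball r y b0 y0 :
  M (vball w b0 y0) -> r <= b0 -> r <= w (y0 - y) -> meets_nest r y.
Proof.
move=> MY0 r_b0 r_y0y Y MY.
have [Y_Y0 | Y0_Y] := nestM.2 _ _ MY MY0; last first.
  by exists y0 => //; apply: Y0_Y; exact/(vball_center hw).
have [y' [b' [_ YE]]] := nestM.1 _ MY.
have Yy' : Y y' by rewrite YE; exact/(vball_center hw).
exists y' => //; apply: (valuation_trans hw _ r_y0y).
by rewrite (valuationBC hw); exact: le_trans r_b0 (Y_Y0 _ Yy').
Qed.

Lemma meets_nest_top y : meets_nest \top y -> forall Y, M Y -> Y y.
Proof. by move=> meets Y /meets [z Yz /(vball_topE hw) ->]. Qed.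

Definition approx_ball (X : set A) :=
  exists s x, [/\ S s, meets_nest (w (f s)) (f x) & X = vball v (v s) x].

Definition approx_nest (N : set (set A)) :=
  N `<=` approx_ball /\ total_on N subset.

Lemma approx_nest_of_balls N : approx_nest N -> nest_of_balls v N.
Proof.
case=> Napprox Ntot; split; last exact: Ntot.
move=> X /Napprox [s [x [_ _ ->]]].
by exists x, (v s); split => //; exists s.
Qed.

Lemma exists_maximal_approx_nest :
  exists N, approx_nest N /\ forall N', N `<` N' -> ~ approx_nest N'.
Proof.
apply: Zorn_bigcup => F Fapprox Ftot; split.
  by move=> X [N /Fapprox [+ _]]; apply.
move=> X Y [NX FNX NXX] [NY FNY NYY].
have [sub | sub] := Ftot _ _ FNX FNY.
- exact: (Fapprox _ FNY).2 _ _ (sub _ NXX) NYY.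
- exact: (Fapprox _ FNX).2 _ _ NXX (sub _ NYY).
Qed.

Lemma maximal_approx_nest_absorb N X :
  approx_nest N -> (forall N', N `<` N' -> ~ approx_nest N') ->
  approx_ball X -> (forall Y, N Y -> X `<=` Y) -> N X.
Proof.
move=> [Napprox Ntot] Nmax aX X_sub; apply: contrapT => NX.
apply: (Nmax (N `|` [set X])).
  by split; [exact: subsetUl | move=> /(_ X (or_intror erefl))].
split=> [Y [/Napprox // | ->] // | Y Z [NY | ->] [NZ | ->]].
- exact: Ntot.
- by right; exact: X_sub.
- by left; exact: X_sub.
- by left.
Qed.

Lemma approx_radius_le a s t x y0 b0 :
  S s -> S t -> w (y0 - f a) < b0 -> w (f s) = w (y0 - f a) ->
  vball v (v t) x a -> (exists2 z, vball w b0 y0 z & w (f t) <= w (z - f x)) ->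
  v t <= v s.
Proof.
move=> Ss St lt_b0 wfs x_a [z y0_z t_zx].
apply: le_v_of_le_wf => //; rewrite wfs.
have t_xa : w (f t) <= w (f x - f a) by rewrite -raddfB; exact: f_le.
have <- : w (z - f a) = w (y0 - f a).
  apply: (valuation_eq_of_lt hw); rewrite opprB addrA subrK.
  exact: lt_le_trans lt_b0 y0_z.
exact: (valuation_trans hw t_zx t_xa).
Qed.

Lemma no_finer_approx_ball N a s s1 :
  approx_nest N -> (forall N', N `<` N' -> ~ approx_nest N') ->
  (forall X, N X -> X a) ->
  (forall t x, S t -> meets_nest (w (f t)) (f x) -> vball v (v t) x a ->
    v t <= v s) ->
  S s1 -> v s < v s1 -> ~ meets_nest (w (f s1)) (f (a + s)).
Proof.
move=> Nnest Nmax Na rad_s Ss1 lt_s_s1 meets1.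
have v_s : v (a + s - a) = v s by rewrite addrC addKr.
have NX1 : N (vball v (v s1) (a + s)).
  apply: maximal_approx_nest_absorb => //; first by exists s1, (a + s).
  move=> Y NY z X1z; have [t [x [St mt YE]]] := Nnest.1 _ NY.
  have Ya := Na _ NY; rewrite YE in Ya *.
  have le_ts := rad_s _ _ St mt Ya.
  apply: (valuation_trans hv Ya); apply: (valuation_trans hv (b := a + s)).
    by rewrite (valuationBC hv) v_s.
  exact: le_trans le_ts (le_trans (ltW lt_s_s1) X1z).
by have := Na _ NX1; rewrite /vball v_s leNgt lt_s_s1.
Qed.

Lemma nest_meets_image :
  spherically_complete v -> exists a, forall Y, M Y -> Y (f a).
Proof.
move=> Acomplete; have [N [Nnest Nmax]] := exists_maximal_approx_nest.
have [a Na] := Acomplete _ (approx_nest_of_balls Nnest).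
have [|] := pselect (forall Y, M Y -> Y (f a)); first by exists a.
move=> /existsNP [Y0 /not_implyP [MY0 Y0_fa]].
have [y0 [b0 [_ Y0E]]] := nestM.1 _ MY0; rewrite Y0E in MY0 Y0_fa.
have lt_b0 : w (y0 - f a) < b0 by rewrite ltNge; exact/negP.
have /S_approx [s [Ss lt_s]] : y0 - f a != 0.
  by apply: contraTneq lt_b0 => ->; rewrite valuation0 // ltNge lex1.
have wfs : w (f s) = w (y0 - f a) := valuation_eq_of_lt hw lt_s.
rewrite -addrA -opprD -raddfD in lt_s.
pose r := Order.min b0 (w (y0 - f (a + s))).
have meets_r : meets_nest r (f (a + s)).
  by apply: meets_nest_ball MY0 _ _; rewrite ge_min lexx ?orbT.
have [r_top | r_ntop] := eqVneq r \top.
  by exists (a + s); apply: meets_nest_top; rewrite -r_top.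
have [s1 Ss1 wfs1] := wf_onto r_ntop.
have rad_s t x : S t -> meets_nest (w (f t)) (f x) -> vball v (v t) x a -> v t <= v s.
  by move=> St mt x_a; exact: approx_radius_le Ss St lt_b0 wfs x_a (mt _ MY0).
apply: False_ind (no_finer_approx_ball Nnest Nmax Na rad_s Ss1 _ _).
- by apply: lt_v_of_lt_wf => //; rewrite wfs1 wfs lt_min lt_b0.
- by rewrite wfs1.
Qed.

End Transfer.

Theorem mainTheorem1 (A B : zmodType) (d1 d2 : Order.disp_t)
  (G1 : tOrderType d1) (G2 : tOrderType d2)
  (v : A -> G1) (w : B -> G2) (f : {additive A -> B}) (S : A -> Prop) :
  valuation v -> valuation w ->
  (* (a) vs |-> wf(s) is a well-defined order preserving map v(S) -> w(B) *)
  (forall s s' : A, S s -> S s' -> v s = v s' -> w (f s) = w (f s')) ->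
  (forall s s' : A, S s -> S s' -> v s < v s' -> w (f s) < w (f s')) ->
  (* (b) *)
  (forall a s : A, S s -> v s <= v a -> w (f s) <= w (f a)) ->
  (* (c) *)
  (forall b : B, b != 0%R -> exists s : A, S s /\ w b < w (b - f s)%R) ->
  spherically_complete v ->
  (forall b : B, exists a : A, f a = b) /\ spherically_complete w.
Proof.
move=> hv hw phi_eq phi_lt f_le S_approx Acomplete.
have image_meets M (nestM : nest_of_balls w M) :=
  nest_meets_image hv hw phi_eq phi_lt f_le S_approx nestM Acomplete.
split=> [b|]; last by move=> M /image_meets [a Ma]; exists (f a).
have [|a /(_ _ erefl) /(vball_topE hw) fa_b] := image_meets [set vball w \top b].
  split=> [X -> | X Y -> ->]; last by left.
  by exists b, \top; split => //; exists 0; exact: valuation0 hw.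
by exists a.
Qed.
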